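(* Let $n\ge1$ and let $(p_{kl})_{1\le k<l\le n}$ be numbers in $[0,1]$ (write $p_{lk}=p_{kl}$). Let $\mathscr{G}$ be the random undirected graph on $\{1,\dots,n\}$ in which each pair $\{k,l\}$ is an edge independently with probability $p_{kl}$, and let $\vec{\mathscr{G}}$ be the random directed graph on $\{1,\dots,n\}$ in which, for every $k\neq l$, the directed edge $(k,l)$ from $k$ to $l$ is present with probability $p_{kl}$, all these $n(n-1)$ directed edges being independent. Let $K$ be the event that $\mathscr{G}$ is connected and $G$ the event that $\vec{\mathscr{G}}$ is grounded at vertex $1$. Then $P(K)=P(G)$.
   Context: A directed graph on vertex set $\mathscr{V}$ is grounded at $v\in\mathscr{V}$ if for every $w\in\mathscr{V}$ there is a directed path from $w$ to $v$ (the trivial path for $w=v$). *)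

(* Discrete (finite) probability written out explicitly:
   a random (di)graph is a finite product of independent Bernoulli edges,
   so the probability of an event is the sum, over the edge sets in the
   event, of the product of the edge / non-edge probabilities. *)
From HB Require Import structures.
From mathcomp Require Import all_boot all_order all_algebra.
Set Implicit Arguments. Unset Strict Implicit. Unset Printing Implicit Defensive.
Import Order.TTheory GRing.Theory Num.Theory.
Local Open Scope ring_scope.

Section RandomGraphs.
Variables (R : realFieldType) (V : finType).
Variable p : V -> V -> R.
(* an ordering of the vertices, used to pick the unordered pair {k,l} as (k,l) with k<l *)
Variable lt : rel V.

Definition upairs : {set V * V} := [set e | lt e.1 e.2].
Definition dpairs : {set V * V} := [set e | e.1 != e.2].

Definition edge_weight (A E : {set V * V}) : R :=
  \prod_(e in A) (if e \in E then p e.1 e.2 else 1 - p e.1 e.2).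

Definition uconnected (E : {set V * V}) : bool :=
  [forall u, forall v,
     connect [rel x y | ((x, y) \in E) || ((y, x) \in E)] u v].

Definition grounded (E : {set V * V}) (v0 : V) : bool :=
  [forall w, connect [rel x y | (x, y) \in E] w v0].

Definition prob_connected : R :=
  \sum_(E : {set V * V} | E \subset upairs) (uconnected E)%:R * edge_weight upairs E.

Definition prob_grounded (v0 : V) : R :=
  \sum_(E : {set V * V} | E \subset dpairs) (grounded E v0)%:R * edge_weight dpairs E.

End RandomGraphs.

From HB Require Import structures.
From mathcomp Require Import all_boot all_order all_algebra.
From mathcomp Require Import ring.
Set Implicit Arguments. Unset Strict Implicit. Unset Printing Implicit Defensive.
Import Order.TTheory GRing.Theory Num.Theory.
Local Open Scope ring_scope.

(* Reveal the unordered pairs {x, y} one at a time.  In the undirected graph the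
   pair gives both arcs (x, y), (y, x) or neither, with probabilities q and 1 - q;
   in the directed graph the two arcs are independent.  Groundedness is modular
   in these two arcs:  G(E) = G(E + xy) && G(E + yx)  and
   G(E + xy + yx) = G(E + xy) || G(E + yx)  (according to whether y reaches the
   root without the arc yx), so  [G(E + xy)] + [G(E + yx)] = [G(E)] + [G(E + xy + yx)].
   Hence the two mixed directed outcomes, of weight q (1 - q) each, may be
   traded for "neither" and "both", which turns the directed expansion into the
   undirected one.  Finally an undirected graph is connected iff its symmetric
   orientation is grounded at any given vertex. *)

Lemma setU1_ind (T : finType) (P : {set T} -> Prop) :
  P set0 -> (forall (c : T) (S : {set T}), c \notin S -> P S -> P (c |: S)) ->
  forall S, P S.
Proof.
move=> P0 PU S; move Hn: #|S| => n; elim: n S Hn => [|n IH] S Hn.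
  by rewrite (cards0_eq Hn).
have /set0Pn[c cS] : S != set0 by rewrite -card_gt0 Hn.
rewrite -(setD1K cS); apply: PU; first by rewrite !inE eqxx.
by apply: IH; move: Hn; rewrite (cardsD1 c) cS => -[].
Qed.

Lemma big_subset_setU1 (R : nmodType) (T : finType) (c : T) (S : {set T})
    (F : {set T} -> R) :
  c \notin S ->
  \sum_(E : {set T} | E \subset c |: S) F E
  = \sum_(E : {set T} | E \subset S) (F E + F (c |: E)).
Proof.
move=> cS; have notinS (E : {set T}) : E \subset S -> c \notin E.
  by move=> sES; apply: contra cS => /(subsetP sES).
rewrite (bigID (fun E : {set T} => c \in E)) /= addrC big_split /=.
congr (_ + _).
- apply: eq_bigl => E; apply/andP/idP => [[sE cE] | sES].
    apply/subsetP => x xE; move: (subsetP sE x xE); rewrite in_setU1.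
    by case: eqP => // xc; rewrite -xc xE in cE.
  by rewrite notinS // (subset_trans sES) ?subsetU1.
- rewrite (reindex_onto (fun E => c |: E) (fun E => E :\ c)) /=; last first.
    by move=> E /andP[_ cE]; rewrite setD1K.
  apply: eq_bigl => E; apply/idP/idP => [/andP[/andP[sE _] /eqP eqE] | sES].
    by rewrite -eqE subDset.
  by rewrite setUS // setU11 setU1K ?notinS //=.
Qed.

Definition rev_pair {T : Type} (e : T * T) : T * T := (e.2, e.1).

Lemma rev_pairK {T : Type} : involutive (@rev_pair T).
Proof. by case. Qed.

Section Grounded.
Variable T : finType.
Implicit Types (E : {set T * T}) (v : T).

Definition edge_rel E : rel T := [rel x y | (x, y) \in E].

Definition rev_pairs E : {set T * T} := rev_pair @^-1: E.

Lemma rev_pairsU1 (c : T * T) E : rev_pairs (c |: E) = rev_pair c |: rev_pairs E.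
Proof.
apply/setP => -[x y]; rewrite !inE; congr (_ || _).
by case: c => a b; rewrite !xpair_eqE andbC.
Qed.

Lemma groundedP E v0 : reflect (forall w, connect (edge_rel E) w v0) (grounded E v0).
Proof. exact: forallP. Qed.

Lemma connect_subset E E' :
  E \subset E' -> subrel (connect (edge_rel E)) (connect (edge_rel E')).
Proof. by move=> sEE'; apply: connect_sub => x y /(subsetP sEE') xy; apply: connect1. Qed.

Lemma grounded_subset E E' v0 : E \subset E' -> grounded E v0 -> grounded E' v0.
Proof.
move=> sEE' /groundedP gE; apply/groundedP => w; exact: connect_subset sEE' _ _ (gE w).
Qed.

Lemma connect_setU1 a b E x y :
  connect (edge_rel ((a, b) |: E)) x y ->
  connect (edge_rel E) x y || connect (edge_rel E) x a && connect (edge_rel E) b y.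
Proof.
case/connectP => s; elim: s x => [|z s IH] x /=; first by move=> _ ->; rewrite connect0.
case/andP => Exz /IH{}IH /IH; rewrite /edge_rel /= in_setU1 xpair_eqE in Exz.
case/orP: Exz => [/andP[/eqP-> /eqP->] | Exz].
  by case/orP => [|/andP[_]] ->; rewrite connect0 orbT.
case/orP => [zy | /andP[za ->]]; first by rewrite (connect_trans (connect1 Exz) zy).
by rewrite (connect_trans (connect1 Exz) za) orbT.
Qed.

Lemma grounded_setU1_rev E (c : T * T) v0 :
  grounded E v0 = grounded (c |: E) v0 && grounded (rev_pair c |: E) v0.
Proof.
apply/idP/andP => [gE | [/groundedP g1 /groundedP g2]].
  by split; apply: grounded_subset gE; apply: subsetU1.
apply/groundedP => w; case: c g1 g2 => a b /= g1 g2.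
case/orP: (connect_setU1 (g1 w)) => [-> // | /andP[wa _]].
case/orP: (connect_setU1 (g2 w)) => [-> // | /andP[_ av0]].
exact: connect_trans wa av0.
Qed.

Lemma grounded_setU2_rev E (c : T * T) v0 :
  grounded (c |: (rev_pair c |: E)) v0
  = grounded (c |: E) v0 || grounded (rev_pair c |: E) v0.
Proof.
apply/idP/orP => [/groundedP g | []]; last 2 first.
- by apply: grounded_subset; rewrite setUS ?subsetU1.
- by apply: grounded_subset; rewrite subsetU1.
case: c g => a b /= g; set Eab := (a, b) |: E; set Eba := (b, a) |: E.
have gba w : connect (edge_rel ((b, a) |: Eab)) w v0 by rewrite setUCA.
(* Either [b] reaches [v0] without the arc [(b, a)], or [a] reaches it in [Eab],
   hence in [E] or through [b]. *)
have [bv0 | av0] : connect (edge_rel Eab) b v0 \/ connect (edge_rel Eba) a v0.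
  case/orP: (connect_setU1 (gba b)) => [|/andP[_]]; first by left.
  case/connect_setU1/orP => [av0 | /andP[_ bv0]]; [right | left];
    exact: connect_subset (subsetU1 _ _) _ _ _.
- left; apply/groundedP => w.
  by case/orP: (connect_setU1 (gba w)) => [// | /andP[wb _]]; apply: connect_trans wb bv0.
- right; apply/groundedP => w.
  by case/orP: (connect_setU1 (g w)) => [// | /andP[wa _]]; apply: connect_trans wa av0.
Qed.

Lemma grounded_modular E (c : T * T) v0 :
  (grounded (c |: E) v0 + grounded (rev_pair c |: E) v0
   = grounded E v0 + grounded (c |: (rev_pair c |: E)) v0)%N.
Proof.
rewrite (grounded_setU1_rev E c) grounded_setU2_rev.
by case: (grounded (c |: E) v0); case: (grounded (rev_pair c |: E) v0).
Qed.

Lemma uconnected_grounded E v : uconnected E = grounded (E :|: rev_pairs E) v.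
Proof.
have eqE : [rel x y | ((x, y) \in E) || ((y, x) \in E)] =2 edge_rel (E :|: rev_pairs E).
  by move=> x y; rewrite /edge_rel /= !inE.
have symE : connect_sym (edge_rel (E :|: rev_pairs E)).
  by apply: sym_connect_sym => x y; rewrite /edge_rel /= !inE orbC.
apply/forallP/groundedP => [conn w | gr x].
  by rewrite -(eq_connect eqE); move/forallP: (conn w).
apply/forallP => y; rewrite (eq_connect eqE).
by apply: connect_trans (gr x) _; rewrite symE.
Qed.

End Grounded.

Section OrderedPairs.
Variables (V : finType) (lt : rel V).
Hypothesis lt_asym : forall x y, lt x y -> ~~ lt y x.
Hypothesis lt_total : forall x y, (x != y) = lt x y || lt y x.

Lemma upairs_rev_free : {in upairs lt, forall e, rev_pair e \notin upairs lt}.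
Proof. by move=> e; rewrite !inE => /lt_asym. Qed.

Lemma upairs_setU_rev : upairs lt :|: rev_pairs (upairs lt) = dpairs V.
Proof. by apply/setP => e; rewrite !inE lt_total. Qed.

End OrderedPairs.

Section Symmetrization.
Variables (R : realFieldType) (T : finType) (p : T -> T -> R).
Hypothesis p_sym : forall x y, p x y = p y x.
Variable f : {set T * T} -> R.
Hypothesis f_modular : forall (c : T * T) (E : {set T * T}),
  f (c |: E) + f (rev_pair c |: E) = f E + f (c |: (rev_pair c |: E)).
Implicit Types (P E : {set T * T}) (c : T * T).

Lemma edge_weight_setU1 c P E : c \notin P ->
  edge_weight p (c |: P) E
  = (if c \in E then p c.1 c.2 else 1 - p c.1 c.2) * edge_weight p P E.
Proof. by move=> cP; rewrite /edge_weight big_setU1. Qed.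

Lemma edge_weight_setU1r c P E : c \notin P -> edge_weight p P (c |: E) = edge_weight p P E.
Proof.
move=> cP; apply: eq_bigr => e eP; rewrite in_setU1.
by case: eqP => [ec | //]; rewrite -ec eP in cP.
Qed.

(* [E0] collects the arcs already revealed; an undirected edge on the pair
   [e \in P] contributes both arcs [e] and [rev_pair e]. *)
Definition undirected_expect P E0 : R :=
  \sum_(A : {set T * T} | A \subset P)
    edge_weight p P A * f (E0 :|: (A :|: rev_pairs A)).

Definition directed_expect P E0 : R :=
  \sum_(B : {set T * T} | B \subset P :|: rev_pairs P)
    edge_weight p (P :|: rev_pairs P) B * f (E0 :|: B).

Lemma undirected_expect_setU1 c P E0 : c \notin P ->
  undirected_expect (c |: P) E0
  = (1 - p c.1 c.2) * undirected_expect P E0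
    + p c.1 c.2 * undirected_expect P (c |: (rev_pair c |: E0)).
Proof.
move=> cP; rewrite /undirected_expect big_subset_setU1 // big_split /= !mulr_sumr.
congr (_ + _); apply: eq_bigr => A sAP; rewrite edge_weight_setU1 // mulrA.
  by rewrite ifN //; apply: contra cP => /(subsetP sAP).
rewrite setU11 edge_weight_setU1r // rev_pairsU1; congr (_ * f _).
by rewrite setUACA setUA; congr (_ :|: _); rewrite setUC -setUA.
Qed.

Lemma directed_expect_modular c P E0 :
  directed_expect P (c |: E0) + directed_expect P (rev_pair c |: E0)
  = directed_expect P E0 + directed_expect P (c |: (rev_pair c |: E0)).
Proof.
rewrite /directed_expect -!big_split; apply: eq_bigr => B _ /=.
by rewrite -!mulrDr -!setUA f_modular.
Qed.

Lemma directed_expect_setU1 c P E0 :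
  c \notin P -> rev_pair c \notin P -> c != rev_pair c ->
  let q := p c.1 c.2 in
  directed_expect (c |: P) E0
  = (1 - q) ^+ 2 * directed_expect P E0
    + q * (1 - q) * (directed_expect P (c |: E0) + directed_expect P (rev_pair c |: E0))
    + q ^+ 2 * directed_expect P (c |: (rev_pair c |: E0)).
Proof.
move=> cP c'P cc' q; set c' := rev_pair c; set Q := P :|: rev_pairs P.
have c'Q : c' \notin Q by rewrite /Q in_setU negb_or c'P inE /c' rev_pairK.
have cQ : c \notin Q by rewrite /Q in_setU negb_or cP inE.
have cc'Q : c \notin c' |: Q by rewrite in_setU1 negb_or cc'.
rewrite /directed_expect.
have -> : (c |: P) :|: rev_pairs (c |: P) = c |: (c' |: Q).
  by rewrite rev_pairsU1 setUACA -setUA.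
rewrite big_subset_setU1 // big_subset_setU1 // -big_split /=.
rewrite !mulr_sumr -!big_split /=; apply: eq_bigr => B sBQ.
have cB : c \notin B by apply: contra cQ => /(subsetP sBQ).
have c'B : c' \notin B by apply: contra c'Q => /(subsetP sBQ).
have q' : p c'.1 c'.2 = q by rewrite p_sym.
rewrite !edge_weight_setU1 // !edge_weight_setU1r //.
rewrite !in_setU1 eqxx eq_sym (negbTE cc') (negbTE cB) (negbTE c'B) /= q' eqxx.
rewrite -/q -/Q -!setUA !(setUCA E0) /=; ring.
Qed.

Lemma undirected_directed_expect P E0 :
  {in P, forall e, rev_pair e \notin P} ->
  undirected_expect P E0 = directed_expect P E0.
Proof.
elim/setU1_ind: P E0 => [|c P cP IH] E0 P_asym.
  rewrite /undirected_expect /directed_expect /rev_pairs !preimset0 setU0.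
  by rewrite !(big_pred1 set0) ?preimset0 ?setU0 // => A; rewrite subset0.
have /P_asym : c \in c |: P by rewrite setU11.
rewrite in_setU1 negb_or eq_sym => /andP[cc' c'P].
have {}IH E1 : undirected_expect P E1 = directed_expect P E1.
  have /subsetP sub := subsetU1 c P.
  by apply: IH => e /sub/P_asym; apply: contra => /sub.
rewrite undirected_expect_setU1 // directed_expect_setU1 // directed_expect_modular.
rewrite !IH; ring.
Qed.

End Symmetrization.

Theorem lemma3p2 (R : realFieldType) (n : nat) (hn : (0 < n)%N)
  (p : 'I_n -> 'I_n -> R)
  (hsym : forall k l, p k l = p l k)
  (hp : forall k l, k != l -> 0 <= p k l <= 1) :
  prob_connected p (fun k l : 'I_n => (k < l)%N)
  = prob_grounded p (Ordinal hn).
Proof.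
set lt := fun k l : 'I_n => (k < l)%N; set v0 := Ordinal hn.
have lt_asym (x y : 'I_n) : lt x y -> ~~ lt y x by move/ltnW; rewrite leqNgt.
have lt_total (x y : 'I_n) : (x != y) = lt x y || lt y x.
  by rewrite -(inj_eq val_inj) neq_ltn.
pose f E : R := (grounded E v0)%:R.
have f_modular c E : f (c |: E) + f (rev_pair c |: E) = f E + f (c |: (rev_pair c |: E)).
  by rewrite /f -!natrD grounded_modular.
transitivity (undirected_expect p f (upairs lt) set0).
  by apply: eq_bigr => A _; rewrite (uconnected_grounded _ v0) set0U mulrC.
rewrite (undirected_directed_expect hsym f_modular set0 (upairs_rev_free lt_asym)).
rewrite /directed_expect (upairs_setU_rev lt_total).
by apply: eq_bigr => B _; rewrite set0U mulrC.
Qed.
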